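(* Let $k$ be a positive integer. The triangular grid graph $T_k$ with $k$ levels is cyclically orderable if and only if $k\le 4$.
   Context: For a positive integer $k$, the triangular grid graph $T_k$ with $k$ levels is the graph whose vertices are the pairs $(i,j)$ of integers with $0\le j\le i\le k-1$, and in which $(i,j)$ is adjacent to $(i,j+1)$ (when $j+1\le i$), to $(i+1,j)$ and to $(i+1,j+1)$ (when $i+1\le k-1$); it is the triangular lattice cut into the shape of a large triangle with $k$ vertices on each side. A cyclic base ordering (CBO) of a connected graph $G$ is a cyclic ordering of $E(G)$, i.e. a bijection $\mathcal{O}:E(G)\to\{1,\dots,|E(G)|\}$, such that for every $i\in\{1,\dots,|E(G)|\}$ the edges $\mathcal{O}^{-1}(i),\mathcal{O}^{-1}(i+1),\dots,\mathcal{O}^{-1}(i+|V(G)|-2)$ (indices taken cyclically modulo $|E(G)|$) induce a spanning tree of $G$. $G$ is cyclically orderable if it has a CBO. The one-vertex edgeless graph $T_1$ is regarded as trivially cyclically orderable. *)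

From mathcomp Require Import all_boot.
Set Implicit Arguments. Unset Strict Implicit. Unset Printing Implicit Defensive.

Section Graphs.
Variable V : finType.
Variable adj : rel V.

Definition edges : {set {set V}} :=
  [set e : {set V} | [exists x, exists y, adj x y && (e == [set x; y])]].

Definition adjF (F : {set {set V}}) : rel V := fun x y => (x != y) && ([set x; y] \in F).

Definition has_cycle (F : {set {set V}}) : Prop :=
  exists c : seq V, [/\ 3 <= size c, uniq c & cycle (adjF F) c].

Definition spanning_tree (F : {set {set V}}) : Prop :=
  [/\ F \subset edges,
      (forall x y : V, connect (adjF F) x y) & ~ has_cycle F].

(* A cyclic base ordering, given as the list s = [O^-1(1); ...; O^-1(|E|)]
   of all edges, each exactly once; every cyclic window of |V|-1 consecutive
   edges induces a spanning tree. *)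
Definition is_CBO (s : seq {set V}) : Prop :=
  perm_eq s (enum edges) /\
  forall i, i < size s ->
    spanning_tree [set nth set0 s ((i + t) %% size s) | t : 'I_(#|V|.-1)].

Definition cyclically_orderable : Prop := exists s, is_CBO s.

End Graphs.

Definition Tvert (k : nat) := {p : 'I_k * 'I_k | p.2 <= p.1}.

Definition Tadj0 (k : nat) (u v : Tvert k) : bool :=
  let: (i, j) := (nat_of_ord (val u).1, nat_of_ord (val u).2) in
  let: (i', j') := (nat_of_ord (val v).1, nat_of_ord (val v).2) in
  ((i' == i) && (j' == j.+1)) || ((i' == i.+1) && ((j' == j) || (j' == j.+1))).

Definition Tadj (k : nat) : rel (Tvert k) := fun u v => Tadj0 u v || Tadj0 v u.
Arguments Tadj k : clear implicits.

(* If a graph with n >= 2 vertices and m edges has a cyclic base ordering, every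
   cyclic window of n - 1 consecutive edges is a spanning tree and so contains an
   edge at any fixed vertex v; since each position lies in n - 1 windows, this
   gives m <= (n - 1) deg v.  The corner of T_k has degree 2, while T_k has
   C(k+1, 2) vertices and 3 C(k, 2) edges, and 3 C(k, 2) > 2 (C(k+1, 2) - 1) as
   soon as k >= 5.  For k <= 4 an explicit ordering is checked by computation:
   each window is certified to be a spanning tree by a parent map along which a
   depth function strictly decreases. *)

From mathcomp Require Import all_boot zify.
Set Implicit Arguments. Unset Strict Implicit. Unset Printing Implicit Defensive.

Lemma sum_modS m (F : nat -> nat) : \sum_(i < m) F (i.+1 %% m) = \sum_(i < m) F i.
Proof.
case: m F => [|m] F; first by rewrite !big_ord0.
rewrite big_ord_recr big_ord_recl modnn [RHS]addnC; congr (_ + _).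
by apply: eq_bigr => i _; rewrite /= modn_small // ltnS.
Qed.

Lemma sum_mod_shift m t (F : nat -> nat) :
  \sum_(i < m) F ((i + t) %% m) = \sum_(i < m) F i.
Proof.
elim: t F => [|t IHt] F; first by apply: eq_bigr => i _; rewrite addn0 modn_small.
rewrite -[RHS]IHt -[RHS](sum_modS m (fun j => F ((j + t) %% m))).
by apply: eq_bigr => i _; rewrite modnDml addSnnS.
Qed.

Lemma cyclic_windows_cover m N (A : pred nat) :
  (forall i, i < m -> exists2 t, t < N & A ((i + t) %% m)) ->
  m <= N * \sum_(p < m) A p.
Proof.
move=> meetA.
have -> : N * \sum_(p < m) A p = \sum_(t < N) \sum_(i < m) A ((i + t) %% m).
  rewrite -[N in LHS]card_ord -sum_nat_const.
  by apply: eq_bigr => t _; rewrite (sum_mod_shift m t A).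
rewrite exchange_big /= -[m in X in X <= _]card_ord -sum1_card leq_sum // => i _.
have [t lt_tN At] := meetA i (ltn_ord i).
by rewrite (bigD1 (Ordinal lt_tN)) //= At.
Qed.

Lemma cycle_two_neighbours (T : eqType) (e : rel T) c x :
  3 <= size c -> uniq c -> cycle e c -> x \in c ->
  exists y z, [/\ y \in c, z \in c, y != z, e x y & e z x].
Proof.
move=> size_c uniq_c cycle_c /rot_to[i p rot_c].
have mem_p y : y \in p -> y \in c by move=> yp; rewrite -(mem_rot i) rot_c inE yp orbT.
move: size_c uniq_c cycle_c; rewrite -(size_rot i) -(rot_uniq i) -(rot_cycle i) rot_c.
case: p {rot_c} mem_p => [|y q] //; case/lastP: q => [|q z] // mem_p _.
rewrite /= rcons_path last_rcons => /and3P[_ y_notin _] /and3P[exy _ ezx].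
exists y, z; split=> //; try by apply: mem_p; rewrite !inE ?mem_rcons ?inE ?eqxx ?orbT.
by apply: contraNneq y_notin => ->; rewrite mem_rcons mem_head.
Qed.

Lemma eq_set2 (T : finType) (x y x' y' : T) :
  [set x; y] = [set x'; y'] -> (x = x' /\ y = y') \/ (x = y' /\ y = x').
Proof.
move=> exy.
have /set2P[] : x \in [set x'; y'] by rewrite -exy set21.
all: have /set2P[] : y \in [set x'; y'] by rewrite -exy set22.
all: have /set2P[] : x' \in [set x; y] by rewrite exy set21.
all: have /set2P[] : y' \in [set x; y] by rewrite exy set22.
all: by move=> *; subst; auto.
Qed.

Section SpanningSubgraphs.
Variable V : finType.

Lemma adjF_sym (F : {set {set V}}) : symmetric (adjF F).
Proof. by move=> x y; rewrite /adjF eq_sym setUC. Qed.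

Variables (F : {set {set V}}) (r : V) (par : V -> V) (d : V -> nat).
Hypothesis par_lt : forall x, x != r -> d (par x) < d x.

Lemma connect_of_parent :
  (forall x, x != r -> [set x; par x] \in F) -> forall x y, connect (adjF F) x y.
Proof.
move=> par_edge.
have to_root x : connect (adjF F) x r.
  have [n] := ubnP (d x); elim: n x => // n IHn x /ltnSE le_dx.
  have [-> // | xr] := eqVneq x r.
  apply: connect_trans (connect1 _) (IHn _ (leq_trans (par_lt xr) le_dx)).
  rewrite /adjF par_edge // andbT; apply: contraTneq (par_lt xr) => <-.
  by rewrite ltnn.
move=> x y; apply: connect_trans (to_root x) _.
by rewrite (sym_connect_sym (@adjF_sym F)).
Qed.

Lemma acyclic_of_parent :
  (forall e, e \in F -> exists2 x, x != r & e = [set x; par x]) -> ~ has_cycle F.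
Proof.
move=> edge_par [c [size_c uniq_c cycle_c]].
have [x xc max_x] : exists2 x, x \in c & forall y, y \in c -> d y <= d x.
  case: c size_c {uniq_c cycle_c} => // z c _.
  by case: (@arg_maxnP _ z (mem (z :: c)) d (mem_head _ _)) => x; exists x.
(* On a cycle, both neighbours of a vertex of maximal depth would be its parent. *)
have nb_par y : y \in c -> adjF F x y -> y = par x.
  move=> yc /andP[_ /edge_par[w wr /eq_set2[[-> ->] // | [xpw yw]]]].
  by have := max_x y yc; rewrite yw xpw leqNgt par_lt.
have [y [z [yc zc yz exy ezx]]] := cycle_two_neighbours size_c uniq_c cycle_c xc.
have exz : adjF F x z by rewrite adjF_sym.
by move: yz; rewrite (nb_par y yc exy) (nb_par z zc exz) eqxx.
Qed.

End SpanningSubgraphs.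

Section DegreeBound.
Variables (V : finType) (adj : rel V).

Lemma CBO_window_incident s v :
  is_CBO adj s -> 1 < #|V| -> forall i, i < size s ->
  exists2 t, t < #|V|.-1 & v \in nth set0 s ((i + t) %% size s).
Proof.
move=> [_ tree] V2 i lt_i.
have [u uv] : exists u, u != v.
  have /card_gt1P[x [y [_ _ xy]]] := V2.
  by case: (eqVneq x v) => [xv | ]; [exists y; rewrite -xv eq_sym | exists x].
have [_ /(_ v u)/connectP[[|z p] /= step last_u] _] := tree i lt_i.
  by rewrite last_u eqxx in uv.
case/andP: step => /andP[_ /imsetP[t _ vz_t]] _.
by exists t; rewrite ?ltn_ord // -vz_t set21.
Qed.

Lemma cyclically_orderable_edges_le_degree v :
  cyclically_orderable adj -> 1 < #|V| ->
  #|edges adj| <= #|V|.-1 * #|[set e in edges adj | v \in e]|.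
Proof.
move=> [s CBOs] V2; have [perm_s _] := CBOs.
have size_s : size s = #|edges adj| by rewrite cardE (perm_size perm_s).
have degree_v :
    \sum_(p < size s) (v \in nth set0 s p) = #|[set e in edges adj | v \in e]|.
  rewrite -(big_mkord xpredT (fun p => nat_of_bool (v \in nth set0 s p))).
  rewrite -(big_nth set0 xpredT (fun e => nat_of_bool (v \in e))).
  rewrite (perm_big _ perm_s) big_enum -sum1_card big_mkcond [RHS]big_mkcond.
  by apply: eq_bigr => e _; rewrite inE; case: (e \in _) (v \in e).
rewrite -size_s -degree_v.
exact/(cyclic_windows_cover (A := fun p => v \in nth set0 s p))/CBO_window_incident.
Qed.

End DegreeBound.

Definition coord k (x : Tvert k) : nat * nat := (nat_of_ord (val x).1, nat_of_ord (val x).2).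

Definition in_T k (p : nat * nat) : bool := (p.1 < k) && (p.2 <= p.1).

Definition grid_step (u v : nat * nat) : bool :=
  ((v.1 == u.1) && (v.2 == u.2.+1)) || ((v.1 == u.1.+1) && ((v.2 == u.2) || (v.2 == u.2.+1))).

Definition grid_adj (u v : nat * nat) : bool := grid_step u v || grid_step v u.

(* Total inverse of [coord]: coordinates are reduced modulo [k] and [j] is clamped to [i]. *)
Definition Tvert_of k (k_gt0 : 0 < k) (p : nat * nat) : Tvert k :=
  exist (fun q : 'I_k * 'I_k => q.2 <= q.1)
    (Ordinal (ltn_pmod p.1 k_gt0),
     Ordinal (leq_ltn_trans (geq_minr (p.2 %% k) (p.1 %% k)) (ltn_pmod p.1 k_gt0)))
    (geq_minr _ _).

Section Coordinates.
Variables (k : nat) (k_gt0 : 0 < k).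
Local Notation vert := (Tvert_of k_gt0).

Lemma coord_in_T (x : Tvert k) : in_T k (coord x).
Proof. by case: x => [[i j] /= le_ji]; rewrite /in_T le_ji ltn_ord. Qed.

Lemma coordK : cancel (@coord k) vert.
Proof.
case=> [[i j] /= le_ji]; apply: val_inj; congr pair; apply: val_inj => /=.
  by rewrite modn_small.
by rewrite !modn_small // (minn_idPl le_ji).
Qed.

Lemma Tvert_ofK p : in_T k p -> coord (vert p) = p.
Proof.
case: p => i j /andP[/= lt_ik le_ji]; rewrite /coord /= !modn_small //; last lia.
by rewrite (minn_idPl le_ji).
Qed.

Lemma Tvert_of_inj p q : in_T k p -> in_T k q -> vert p = vert q -> p = q.
Proof. by move=> Tp Tq epq; rewrite -(Tvert_ofK Tp) -(Tvert_ofK Tq) epq. Qed.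

Lemma Tadj_coord (x y : Tvert k) : Tadj k x y = grid_adj (coord x) (coord y).
Proof. by []. Qed.

End Coordinates.

Definition Tcoords k : seq (nat * nat) := [seq (i, j) | i <- iota 0 k, j <- iota 0 i.+1].

Lemma mem_Tcoords k p : (p \in Tcoords k) = in_T k p.
Proof.
apply/allpairsPdep/idP => [[i [j [ik ji ->]]] | ].
  by move: ik ji; rewrite !mem_iota /in_T /=; lia.
case: p => i j /andP[ik ji]; exists i, j; rewrite !mem_iota; split=> //=; lia.
Qed.

Lemma uniq_Tcoords k : uniq (Tcoords k).
Proof.
apply: allpairs_uniq_dep => [|i _|]; rewrite ?iota_uniq //.
by move=> [i j] [i' j'] _ _ [-> ->].
Qed.

Lemma card_Tvert k (k_gt0 : 0 < k) : #|{: Tvert k}| = size (Tcoords k).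
Proof.
rewrite cardT -(size_map (@coord k)); apply/perm_size/uniq_perm.
- by rewrite (map_inj_uniq (can_inj (coordK k_gt0))) enum_uniq.
- exact: uniq_Tcoords.
move=> p; rewrite mem_Tcoords; apply/mapP/idP => [[x _ ->] | Tp].
  exact: coord_in_T.
by exists (Tvert_of k_gt0 p); rewrite ?mem_enum ?Tvert_ofK.
Qed.

Lemma size_allpairs_iota (T : Type) (f : nat -> nat -> T) n (g : nat -> nat) :
  size [seq f i j | i <- iota 0 n, j <- iota 0 (g i)] = \sum_(0 <= i < n) g i.
Proof.
rewrite size_allpairs_dep sumnE big_map /index_iota subn0.
by apply: eq_bigr => i _; rewrite size_iota.
Qed.

Lemma size_Tcoords k : size (Tcoords k) = 'C(k.+1, 2).
Proof. by rewrite size_allpairs_iota -bin2_sum big_nat_recl. Qed.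

Notation cedge := ((nat * nat) * (nat * nat))%type.

Definition Tedges k : seq cedge :=
  [seq ((i, j), (i, j.+1)) | i <- iota 0 k, j <- iota 0 i] ++
  [seq ((i, j), (i.+1, j)) | i <- iota 0 k.-1, j <- iota 0 i.+1] ++
  [seq ((i, j), (i.+1, j.+1)) | i <- iota 0 k.-1, j <- iota 0 i.+1].

Lemma size_Tedges k : size (Tedges k) = 3 * 'C(k, 2).
Proof.
have sum_pred : \sum_(0 <= i < k.-1) i.+1 = 'C(k, 2).
  by case: k => [|k]; [rewrite big_geq | rewrite -bin2_sum big_nat_recl].
rewrite !size_cat !size_allpairs_iota bin2_sum sum_pred; lia.
Qed.

Lemma mem_Tedges k (e : cedge) :
  (e \in Tedges k) = [&& in_T k e.1, in_T k e.2 & grid_step e.1 e.2].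
Proof.
case: e => [[i j] [i' j']]; rewrite /in_T /grid_step /= !mem_cat.
apply/idP/idP => [|Tij].
  by case/or3P=> /allpairsPdep[a [b [ai ba [-> -> -> ->]]]];
    move: ai ba; rewrite !mem_iota; lia.
have : i' = i /\ j' = j.+1 \/ i' = i.+1 /\ j' = j \/ i' = i.+1 /\ j' = j.+1 by lia.
case=> [[? ?] | [[? ?] | [? ?]]]; subst.
- by apply/or3P/Or31/allpairsPdep; exists i, j; rewrite !mem_iota; split=> //=; lia.
- by apply/or3P/Or32/allpairsPdep; exists i, j; rewrite !mem_iota; split=> //=; lia.
- by apply/or3P/Or33/allpairsPdep; exists i, j; rewrite !mem_iota; split=> //=; lia.
Qed.

Lemma uniq_Tedges k : uniq (Tedges k).
Proof.
have uniq_family (f : nat -> nat -> cedge) n g :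
    (forall i j i' j', f i j = f i' j' -> i = i' /\ j = j') ->
    uniq [seq f i j | i <- iota 0 n, j <- iota 0 (g i)].
  move=> f_inj; apply: allpairs_uniq_dep => [|i _|]; rewrite ?iota_uniq //.
  by move=> [i j] [i' j'] _ _ /f_inj /= [-> ->].
have family_eq (f : nat -> nat -> cedge) s t e :
    e \in [seq f i j | i <- s, j <- t i] -> exists i j, e = f i j.
  by move=> /allpairsPdep[i [j [_ _ ->]]]; exists i, j.
rewrite !cat_uniq !uniq_family ?andTb ?andbT; try by move=> i j i' j' [-> ->].
apply/andP; split; apply/hasPn => e; rewrite ?mem_cat.
  by case/orP=> /family_eq[i [j ->]]; apply/negP => /family_eq[i' [j' []]]; lia.
by move=> /family_eq[i [j ->]]; apply/negP => /family_eq[i' [j' []]]; lia.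
Qed.

Section Edges.
Variables (k : nat) (k_gt0 : 0 < k).
Local Notation vert := (Tvert_of k_gt0).

Definition Tedge (e : cedge) : {set Tvert k} := [set vert e.1; vert e.2].

Lemma perm_Tedges : perm_eq (map Tedge (Tedges k)) (enum (edges (Tadj k))).
Proof.
apply: uniq_perm; rewrite ?enum_uniq //.
  rewrite map_inj_in_uniq ?uniq_Tedges // => -[u v] [u' v'].
  rewrite !mem_Tedges /= => /and3P[Tu Tv uv] /and3P[Tu' Tv' uv'] /eq_set2[[] | []].
    by move=> /(Tvert_of_inj Tu Tu') -> /(Tvert_of_inj Tv Tv') ->.
  move=> /(Tvert_of_inj Tu Tv') eu /(Tvert_of_inj Tv Tu') ev; move: uv uv'.
  by rewrite eu ev /grid_step; lia.
move=> e; rewrite mem_enum inE; apply/mapP/existsP => [[[u v] uv ->] | [x /existsP[y]]].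
  move: uv; rewrite mem_Tedges /= => /and3P[Tu Tv uv].
  exists (vert u); apply/existsP; exists (vert v).
  by rewrite Tadj_coord !Tvert_ofK // /grid_adj uv eqxx.
rewrite Tadj_coord => /andP[/orP[] xy /eqP ->].
  exists (coord x, coord y); first by rewrite mem_Tedges !coord_in_T.
  by rewrite /Tedge /= !coordK.
exists (coord y, coord x); first by rewrite mem_Tedges !coord_in_T.
by rewrite /Tedge /= !coordK setUC.
Qed.

Lemma card_edges_Tadj : #|edges (Tadj k)| = 3 * 'C(k, 2).
Proof. by rewrite cardE -(perm_size perm_Tedges) size_map size_Tedges. Qed.

Lemma corner_degree_le2 : #|[set e in edges (Tadj k) | vert (0, 0) \in e]| <= 2.
Proof.
set corner := vert (0, 0).
set corner_edges := [set Tedge ((0, 0), (1, 0)); Tedge ((0, 0), (1, 1))].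
have nb z : Tadj k corner z -> [set corner; z] \in corner_edges.
  rewrite Tadj_coord Tvert_ofK ?/in_T ?k_gt0 // -[in [set _; z]](coordK k_gt0 z).
  have := coord_in_T z; case: (coord z) => i j.
  rewrite /in_T /grid_adj /grid_step /= => Tij adj_ij.
  have /andP[/eqP-> /orP[]/eqP->] : (i == 1) && ((j == 0) || (j == 1)) by lia.
    by rewrite set21.
  by rewrite set22.
apply: leq_trans (_ : #|corner_edges| <= 2); last by rewrite cards2 ltnS leq_b1.
apply/subset_leq_card/subsetP => e; rewrite inE => /andP[]; rewrite inE.
move=> /existsP[x /existsP[y /andP[xy /eqP ->]]] /set2P[] e_corner.
  by rewrite -e_corner; apply: nb; rewrite e_corner.
by rewrite -e_corner setUC; apply: nb; rewrite e_corner /Tadj orbC.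
Qed.

Lemma Tedge_edges w : w \in Tedges k -> Tedge w \in edges (Tadj k).
Proof. by move=> Tw; rewrite -mem_enum -(perm_mem perm_Tedges) map_f. Qed.

End Edges.

Lemma T_not_cyclically_orderable k : 4 < k -> ~ cyclically_orderable (Tadj k).
Proof.
move=> k_gt4 co; have k_gt0 : 0 < k by lia.
set corner := Tvert_of k_gt0 (0, 0).
have card_V : #|{: Tvert k}| = 'C(k.+1, 2) by rewrite (card_Tvert k_gt0) size_Tcoords.
have V_gt1 : 1 < #|{: Tvert k}| by rewrite card_V bin2; nia.
have : #|edges (Tadj k)| <=
       #|{: Tvert k}|.-1 * #|[set e in edges (Tadj k) | corner \in e]|.
  exact: cyclically_orderable_edges_le_degree co V_gt1.
move/leq_trans/(_ (leq_mul (leqnn _) (corner_degree_le2 k_gt0))).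
rewrite card_V (card_edges_Tadj k_gt0) !bin2; nia.
Qed.

Definition tree_certificate k r (par : nat * nat -> nat * nat) (d : nat * nat -> nat)
    (W : seq cedge) : bool :=
  all (fun p => (p == r) ||
                (((p, par p) \in W) || ((par p, p) \in W)) && (d (par p) < d p))
      (Tcoords k) &&
  all (fun e : cedge => (e.1 != r) && (e.2 == par e.1) || (e.2 != r) && (e.1 == par e.2)) W.

Section Certificate.
Variables (k : nat) (k_gt0 : 0 < k).
Local Notation vert := (Tvert_of k_gt0).
Local Notation Tedge := (Tedge k_gt0).

Lemma spanning_tree_of_certificate (F : {set {set Tvert k}}) W r par d :
  in_T k r -> {subset W <= Tedges k} ->
  (forall e, e \in F <-> exists2 w, w \in W & e = Tedge w) ->
  tree_certificate k r par d W -> spanning_tree (Tadj k) F.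
Proof.
move=> Tr W_T memF /andP[/allP cert_par /allP cert_W].
have W_in_T w : w \in W -> in_T k w.1 && in_T k w.2.
  by move/W_T; rewrite mem_Tedges => /and3P[-> ->].
have Tedge_F w : w \in W -> Tedge w \in F by move=> Ww; apply/memF; exists w.
have Tedge_swap u v : Tedge (v, u) = Tedge (u, v) by rewrite /Tedge setUC.
have vert_eq p : in_T k p -> (vert p == vert r) = (p == r).
  by move=> Tp; apply/eqP/eqP => [/(Tvert_of_inj Tp Tr) | ->].
pose parT (x : Tvert k) := vert (par (coord x)).
pose dT (x : Tvert k) := d (coord x).
have par_ok (x : Tvert k) : x != vert r ->
    [set x; parT x] \in F /\ dT (parT x) < dT x.
  have Tx : coord x \in Tcoords k by rewrite mem_Tcoords coord_in_T.
  have := cert_par _ Tx; rewrite -(vert_eq _ (coord_in_T x)) coordK.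
  move=> /orP[/eqP-> | ]; first by rewrite eqxx.
  case/andP=> /orP[] Ww lt_d _; have /andP[Tp Tq] := W_in_T _ Ww.
  - rewrite /dT /parT /= Tvert_ofK //; split=> //.
    by have := Tedge_F _ Ww; rewrite /Tedge /= coordK.
  - rewrite /dT /parT /= Tvert_ofK //; split=> //.
    by have := Tedge_F _ Ww; rewrite Tedge_swap /Tedge /= coordK.
split.
- apply/subsetP => e /memF[w /W_T Tw ->]; exact: Tedge_edges.
- by apply: (connect_of_parent (r := vert r) (par := parT) (d := dT)) => x /par_ok[].
- apply: (acyclic_of_parent (r := vert r) (par := parT) (d := dT)).
    by move=> x /par_ok[].
  move=> e /memF[[u v] Ww ->]; have /andP[Tu Tv] := W_in_T _ Ww.
  move: (cert_W _ Ww) => /= /orP[] /andP[ur /eqP->].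
    by exists (vert u); rewrite ?vert_eq // /parT Tvert_ofK.
  by exists (vert v); rewrite ?vert_eq // /parT Tvert_ofK // Tedge_swap.
Qed.

End Certificate.

Fixpoint assoc (K : eqType) (T : Type) (key : K) (s : seq (K * T)) : option T :=
  if s is (k, v) :: s' then if k == key then Some v else assoc key s' else None.

Notation bfs_table := (seq ((nat * nat) * ((nat * nat) * nat))).

(* Breadth-first search from [r] only proposes the parent map and the depths;
   soundness rests on [tree_certificate] alone. *)
Definition bfs_step (W : seq cedge) (A : bfs_table) : bfs_table :=
  foldl (fun A (e : cedge) =>
    match assoc e.1 A, assoc e.2 A with
    | Some (_, du), None => (e.2, (e.1, du.+1)) :: A
    | None, Some (_, dv) => (e.1, (e.2, dv.+1)) :: A
    | _, _ => A
    end) A W.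

Definition bfs (r : nat * nat) (W : seq cedge) : bfs_table :=
  iter (size W) (bfs_step W) [:: (r, (r, 0))].

Definition bfs_parent (A : bfs_table) (p : nat * nat) : nat * nat :=
  if assoc p A is Some (q, _) then q else p.

Definition bfs_depth (A : bfs_table) (p : nat * nat) : nat :=
  if assoc p A is Some (_, d) then d else 0.

Definition window (L : seq cedge) N i : seq cedge :=
  [seq nth ((0, 0), (0, 0)) L ((i + t) %% size L) | t <- iota 0 N].

Definition cbo_check k (L : seq cedge) : bool :=
  perm_eq L (Tedges k) &&
  all (fun i => let W := window L (size (Tcoords k)).-1 i in
                let A := bfs (0, 0) W in
                tree_certificate k (0, 0) (bfs_parent A) (bfs_depth A) W)
      (iota 0 (size L)).

Lemma cyclically_orderable_of_check k (k_gt0 : 0 < k) L :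
  cbo_check k L -> cyclically_orderable (Tadj k).
Proof.
case/andP=> perm_L /allP windows_ok.
exists (map (Tedge k_gt0) L); split.
  exact: perm_trans (perm_map _ perm_L) (perm_Tedges k_gt0).
move=> i; rewrite size_map => lt_i; have L_gt0 : 0 < size L by lia.
have /windows_ok : i \in iota 0 (size L) by rewrite mem_iota.
rewrite (card_Tvert k_gt0).
apply: spanning_tree_of_certificate; first by rewrite /in_T k_gt0.
  by move=> w /mapP[t _ ->]; rewrite -(perm_mem perm_L) mem_nth ?ltn_pmod.
move=> e; split=> [/imsetP[t _ ->] | [w /mapP[t]]].
  exists (nth ((0, 0), (0, 0)) L ((i + t) %% size L)).
    by apply/mapP; exists (nat_of_ord t); rewrite // mem_iota /=.
  by rewrite (nth_map ((0, 0), (0, 0))) ?ltn_pmod.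
rewrite mem_iota => /= lt_t -> ->; apply/imsetP; exists (Ordinal lt_t) => //=.
by rewrite (nth_map ((0, 0), (0, 0))) ?ltn_pmod.
Qed.

Definition cbo_T2 : seq cedge := [:: ((0, 0), (1, 0)); ((0, 0), (1, 1)); ((1, 0), (1, 1))].

Definition cbo_T3 : seq cedge :=
  [:: ((0, 0), (1, 0)); ((1, 0), (1, 1)); ((1, 0), (2, 0)); ((2, 1), (2, 2));
      ((1, 1), (2, 1)); ((0, 0), (1, 1)); ((1, 0), (2, 1)); ((2, 0), (2, 1));
      ((1, 1), (2, 2))].

Definition cbo_T4 : seq cedge :=
  [:: ((0, 0), (1, 0)); ((2, 0), (2, 1)); ((2, 2), (3, 3)); ((2, 2), (3, 2));
      ((1, 1), (2, 2)); ((2, 0), (3, 1)); ((3, 1), (3, 2)); ((1, 0), (2, 1));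
      ((3, 0), (3, 1)); ((0, 0), (1, 1)); ((1, 0), (2, 0)); ((3, 2), (3, 3));
      ((2, 1), (2, 2)); ((1, 1), (2, 1)); ((2, 1), (3, 1)); ((2, 1), (3, 2));
      ((1, 0), (1, 1)); ((2, 0), (3, 0))].

Lemma cbo_check_T1 : cbo_check 1 [::]. Proof. by vm_compute. Qed.
Lemma cbo_check_T2 : cbo_check 2 cbo_T2. Proof. by vm_compute. Qed.
Lemma cbo_check_T3 : cbo_check 3 cbo_T3. Proof. by vm_compute. Qed.
Lemma cbo_check_T4 : cbo_check 4 cbo_T4. Proof. by vm_compute. Qed.

Theorem mainTheorem2 (k : nat) :
  0 < k -> (cyclically_orderable (Tadj k) <-> k <= 4).
Proof.
move=> k_gt0; split=> [co | le_k4].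
  by rewrite leqNgt; apply/negP => /T_not_cyclically_orderable/(_ co).
case: k k_gt0 le_k4 => [|[|[|[|[|//]]]]] // k_gt0 _.
- exact: (cyclically_orderable_of_check k_gt0 cbo_check_T1).
- exact: (cyclically_orderable_of_check k_gt0 cbo_check_T2).
- exact: (cyclically_orderable_of_check k_gt0 cbo_check_T3).
- exact: (cyclically_orderable_of_check k_gt0 cbo_check_T4).
Qed.
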